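(* Let $G$ be a totally bounded Abelian topological group with property $\mathfrak{h}$. Then $G$ has no infinite compact subsets.
   Context: $\mathbb{T}$ is the circle group. A subgroup $N$ of a topological Abelian group $G$ is $h$-embedded in $G$ if every group homomorphism $N\to\mathbb{T}$ extends to a continuous homomorphism $G\to\mathbb{T}$. $G$ has property $\mathfrak{h}$ if every countable subgroup of $G$ is $h$-embedded in $G$. *)

From HB Require Import structures.
From mathcomp Require Import all_boot all_order all_algebra.
From mathcomp Require Import all_classical all_reals all_analysis.
Set Implicit Arguments. Unset Strict Implicit. Unset Printing Implicit Defensive.
Import Order.TTheory GRing.Theory Num.Theory.
Import numFieldNormedType.Exports.
Local Open Scope classical_set_scope.
Local Open Scope ring_scope.

(* The circle group T is modelled as the unit circle in R^2 = C,
   i.e. pairs (a, b) with a^2 + b^2 = 1, with complex multiplication. *)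
Definition on_circle (R : realType) (z : R * R) : Prop :=
  z.1 ^+ 2 + z.2 ^+ 2 = 1.

Definition cmul (R : realType) (z w : R * R) : R * R :=
  (z.1 * w.1 - z.2 * w.2, z.1 * w.2 + z.2 * w.1).

Definition is_subgroup (G : zmodType) (N : set G) : Prop :=
  N 0 /\ (forall x y, N x -> N y -> N (x - y)).

(* f is a group homomorphism N -> T (only its values on N matter) *)
Definition hom_on_to_circle (R : realType) (G : zmodType) (N : set G)
    (f : G -> R * R) : Prop :=
  (forall x, N x -> on_circle (f x)) /\
  (forall x y, N x -> N y -> f (x + y) = cmul (f x) (f y)).

Definition continuous_character (R : realType) (G : topologicalZmodType)
    (chi : G -> R * R) : Prop :=
  hom_on_to_circle [set: G] chi /\ continuous chi.

Definition h_embedded (R : realType) (G : topologicalZmodType) (N : set G) : Prop :=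
  forall f : G -> R * R, hom_on_to_circle N f ->
    exists chi : G -> R * R, continuous_character chi /\
      (forall x, N x -> chi x = f x).

Definition property_h (R : realType) (G : topologicalZmodType) : Prop :=
  forall N : set G, is_subgroup N -> countable N -> h_embedded R N.

Definition totally_bounded_group (G : topologicalZmodType) : Prop :=
  forall U : set G, nbhs 0 U ->
    exists F : set G, finite_set F /\
      forall x : G, exists2 a, F a & U (x - a).

From HB Require Import structures.
From mathcomp Require Import all_boot all_order all_algebra.
From mathcomp Require Import all_classical all_reals all_analysis.
From mathcomp Require Import ring lra zify.
Set Implicit Arguments. Unset Strict Implicit. Unset Printing Implicit Defensive.
Import Order.TTheory GRing.Theory Num.Theory.
Import numFieldNormedType.Exports.
Local Open Scope classical_set_scope.
Local Open Scope ring_scope.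

(* Let [a] be an injective sequence in an infinite compact [K] and [N] the
   countable subgroup it generates. Property h gives, for a countable subgroup
   [H] and [x] outside [H], a continuous character trivial on [H] with
   nonpositive real part at [x]. Hence countable subgroups are closed, a cluster
   point [c] of [a] lies in [N], and countably many characters separate the
   points of [N]; compactness of [K] then makes a diagonal subsequence [s] of
   [a] converge to [c] along every continuous character. This is impossible.
   If infinitely many [s n] lie in a finitely generated subgroup, induction on
   the number of generators reduces to [s n - c = k_n e] modulo a subgroup
   meeting [Z e] trivially, and a Kronecker-type angle [t] with
   [cos (k_n t) <= 0] infinitely often gives a character keeping [chi (s n - c)]
   in the left half plane infinitely often. Otherwise the [s n] eventually leave
   every finitely generated subgroup, and extending characters one [s n] at a
   time, gluing them by property h on the union, has the same effect. *)

Section Circle.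
Variable R : realType.
Implicit Types (s t : R) (z w u : R * R).

Definition cis t : R * R := (cos t, sin t).

Definition eclose z w (e : R) := `|z.1 - w.1| < e /\ `|z.2 - w.2| < e.

Lemma on_circle_cis t : on_circle (cis t).
Proof. by rewrite /on_circle /= cos2Dsin2. Qed.

Lemma cmul_cis s t : cmul (cis s) (cis t) = cis (s + t).
Proof. by rewrite /cmul /cis /= cosD sinD; congr (_, _); ring. Qed.

Lemma cmulA z w u : cmul z (cmul w u) = cmul (cmul z w) u.
Proof. rewrite /cmul /=; congr (_, _); ring. Qed.

Lemma cmulC z w : cmul z w = cmul w z.
Proof. rewrite /cmul /=; congr (_, _); ring. Qed.

Lemma cmul_cis0 z : cmul (cis 0) z = z.
Proof. case: z => a b; rewrite /cmul /cis cos0 sin0 /=; congr (_, _); ring. Qed.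

Lemma on_circle_cmul z w : on_circle z -> on_circle w -> on_circle (cmul z w).
Proof.
case: z => a b; case: w => c d; rewrite /on_circle /cmul /= => zC wC.
have -> : (a * c - b * d) ^+ 2 + (a * d + b * c) ^+ 2 = (a^+2 + b^+2) * (c^+2 + d^+2) by ring.
by rewrite zC wC mulr1.
Qed.

Lemma on_circleP z : on_circle z -> exists t, z = cis t.
Proof.
case: z => a b; rewrite /on_circle /= => zC.
have a_itv : -1 <= a <= 1 by apply/andP; split; nra.
have cos_acos : cos (acos a) = a by rewrite acosK // in_itv.
have sin_acos : sin (acos a) = `|b|.
  by rewrite sin_acos // -zC addrC addKr sqrtr_sqr.
have [b_ge0|b_lt0] := leP 0 b.
  by exists (acos a); rewrite /cis cos_acos sin_acos ger0_norm.
by exists (- acos a); rewrite /cis cosN sinN cos_acos sin_acos ltr0_norm // opprK.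
Qed.

Lemma cis_periodic (q : int) t : cis (t + q%:~R * (pi *+ 2)) = cis t.
Proof.
have cis_nat (n : nat) s : cis (s + n%:R * (pi *+ 2)) = cis s.
  by rewrite /cis mulr_natl (periodicn (@cosD2pi R)) (periodicn (@sinD2pi R)).
case: q => n; first exact: cis_nat.
by rewrite NegzE mulrNz pmulrn mulNr -(cis_nat n.+1 (t - _)) subrK.
Qed.

Lemma cos_le0_halfturn t : pi / 2 <= t <= pi / 2 + pi -> cos t <= 0.
Proof.
move=> /andP [t_ge t_le].
have := cosDpi (t - pi); rewrite subrK => ->.
rewrite oppr_le0; apply: cos_ge0_pihalf; apply/andP; split; lra.
Qed.

(* [|u w - w| = |u - 1| >= sqrt 2] when [Re u <= 0], so some coordinate of
   [u w - w] has absolute value at least 1. *)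
Lemma cmul_not_eclose u w : on_circle u -> u.1 <= 0 -> on_circle w -> ~ eclose (cmul u w) w 1.
Proof.
case: u => a b; case: w => c d; rewrite /on_circle /eclose /cmul /= => uC a_le0 wC [].
move=> /ltr_normlP [? ?] /ltr_normlP [? ?].
have : (a * c - b * d - c) ^+ 2 + (a * d + b * c - d) ^+ 2
    = ((a - 1) ^+ 2 + b ^+ 2) * (c ^+ 2 + d ^+ 2) by ring.
rewrite wC mulr1; nra.
Qed.

Lemma eclose_cis0_gt0 z : eclose z (cis 0) 1 -> 0 < z.1.
Proof. by rewrite /eclose /cis cos0 /= => -[/ltr_normlP [? ?] _]; lra. Qed.

Lemma eclose_sym z w e : eclose z w e -> eclose w z e.
Proof. by rewrite /eclose distrC [`|z.2 - _|]distrC. Qed.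

Lemma eclose_trans u z w e1 e2 : eclose u z e1 -> eclose u w e2 -> eclose z w (e1 + e2).
Proof.
rewrite /eclose => -[uz1 uz2] [uw1 uw2]; split.
  by rewrite (le_lt_trans (ler_distD u.1 _ _)) // ltrD // distrC.
by rewrite (le_lt_trans (ler_distD u.2 _ _)) // ltrD // distrC.
Qed.

Lemma eclose_le z w e1 e2 : e1 <= e2 -> eclose z w e1 -> eclose z w e2.
Proof. by move=> e12 [? ?]; split; apply: lt_le_trans e12. Qed.

Lemma neq_not_eclose z w : z <> w -> exists2 e, 0 < e & ~ eclose z w e.
Proof.
move=> zw; case: (leP `|z.1 - w.1| `|z.2 - w.2|) => le12.
  exists `|z.2 - w.2|; last by move=> [_]; rewrite ltxx.
  rewrite normr_gt0 subr_eq0; apply/eqP => z2; apply: zw.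
  move: le12; rewrite z2 subrr normr0 normr_le0 subr_eq0 => /eqP z1.
  by case: z z1 z2 => ? ? /= -> ->; case: w.
exists `|z.1 - w.1|; last by move=> [+ _]; rewrite ltxx.
exact: le_lt_trans (normr_ge0 _) le12.
Qed.

End Circle.

Section Subgroup.
Variable G : zmodType.
Implicit Types (H : set G) (x y e : G).

Lemma subgroup0 H : is_subgroup H -> H 0.
Proof. by case. Qed.

Lemma subgroupB H x y : is_subgroup H -> H x -> H y -> H (x - y).
Proof. by case=> _; apply. Qed.

Lemma subgroupN H x : is_subgroup H -> H x -> H (- x).
Proof. by move=> sH Hx; rewrite -sub0r; apply: subgroupB => //; apply: subgroup0. Qed.

Lemma subgroupD H x y : is_subgroup H -> H x -> H y -> H (x + y).
Proof. by move=> sH Hx Hy; rewrite -[y]opprK; apply: subgroupB => //; apply: subgroupN. Qed.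

Lemma subgroupMz H x (j : int) : is_subgroup H -> H x -> H (x *~ j).
Proof.
move=> sH Hx; have Hxn (n : nat) : H (x *+ n).
  by elim: n => [|n IH]; [rewrite mulr0n; apply: subgroup0 | rewrite mulrS; apply: subgroupD].
case: j => n; first exact: Hxn.
by rewrite NegzE mulrNz; apply: subgroupN => //; apply: Hxn.
Qed.

Lemma subgroup_coset_diff H x y d u v : is_subgroup H ->
  H (x - d - u) -> H (y - d - v) -> H (x - y - (u - v)).
Proof.
move=> sH Hx Hy; have := subgroupB sH Hx Hy.
by rewrite !opprD !opprK addrACA [X in X + _]addrACA addNr addr0.
Qed.

Lemma subgroup_bigcup (M : nat -> set G) : (forall k, is_subgroup (M k)) ->
  (forall k, M k `<=` M k.+1) -> is_subgroup (\bigcup_k M k).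
Proof.
move=> sM MS; have Mmono := homo_leq (@subset_refl _) (@subset_trans _) MS.
split; first by exists 0%N => //; apply: subgroup0.
move=> x y [k _ Mx] [l _ My]; exists (maxn k l) => //.
by apply: subgroupB; [|apply: Mmono (leq_maxl k l) _ Mx|apply: Mmono (leq_maxr k l) _ My].
Qed.

Definition adjoin H e := [set x | exists h k, H h /\ x = h + e *~ k].

Lemma adjoin_subgroup H e : is_subgroup H -> is_subgroup (adjoin H e).
Proof.
move=> sH; split; first by exists 0, 0; rewrite mulr0z addr0; split => //; apply: subgroup0.
move=> x y [h1 [k1 [H1 ->]]] [h2 [k2 [H2 ->]]]; exists (h1 - h2), (k1 - k2).
by split; [apply: subgroupB | rewrite mulrzBr opprD addrACA].
Qed.

Lemma adjoin_countable H e : countable H -> countable (adjoin H e).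
Proof.
move=> cH; have -> : adjoin H e = (fun p : G * int => p.1 + e *~ p.2) @` (H `*` [set: int]).
  apply/seteqP; split=> x; first by move=> [h [k [Hh ->]]]; exists (h, k).
  by move=> [[h k] [/= Hh _] <-]; exists h, k.
by apply: sub_countable (card_image_le _ _) _; apply: countableX.
Qed.

Lemma adjoin_subl H e h : H h -> adjoin H e h.
Proof. by move=> Hh; exists h, 0; rewrite mulr0z addr0. Qed.

Lemma adjoin_gen H e : is_subgroup H -> adjoin H e e.
Proof. by move=> sH; exists 0, 1; rewrite add0r; split => //; apply: subgroup0. Qed.

End Subgroup.

Section Homomorphism.
Variables (R : realType) (G : zmodType).
Implicit Types (chi f : G -> R * R) (H : set G) (x y e : G).

Local Notation hom chi := (@hom_on_to_circle R G [set: G] chi).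

Lemma hom_on_circle chi x : hom chi -> on_circle (chi x).
Proof. by case=> + _; apply. Qed.

Lemma homD chi x y : hom chi -> chi (x + y) = cmul (chi x) (chi y).
Proof. by case=> _; apply. Qed.

Lemma hom_subr chi x y : hom chi -> chi x = cmul (chi (x - y)) (chi y).
Proof. by move=> hchi; rewrite -homD // subrK. Qed.

Lemma hom0 chi : hom chi -> chi 0 = cis 0.
Proof.
move=> hchi; have := homD 0 0 hchi; have := hom_on_circle 0 hchi; rewrite addr0 /cis cos0 sin0.
case: (chi 0) => a b; rewrite /on_circle /cmul /= => ab1 [a2 b2].
have b0 : b = 0 by nra.
by rewrite b0; congr (_, _); nra.
Qed.

Lemma hom_cst : hom (fun _ => cis 0).
Proof. by split=> x *; rewrite ?cmul_cis0 //; apply: on_circle_cis. Qed.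

Lemma homN chi x t : hom chi -> chi x = cis t -> chi (- x) = cis (- t).
Proof.
move=> hchi chix.
have : cmul (chi (- x)) (cis t) = cis 0 by rewrite -chix -homD // addNr hom0.
move=> /(congr1 (@cmul R ^~ (cis (- t)))).
by rewrite -cmulA cmul_cis subrr cmulC !cmul_cis0.
Qed.

Lemma homMz chi x t (j : int) : hom chi -> chi x = cis t -> chi (x *~ j) = cis (j%:~R * t).
Proof.
move=> hchi chix; have chixn (n : nat) : chi (x *+ n) = cis (n%:R * t).
  elim: n => [|n IH]; first by rewrite mulr0n mul0r hom0.
  by rewrite mulrS homD // chix IH cmul_cis mulrS mulrDl mul1r.
case: j => n; first exact: chixn.
by rewrite NegzE mulrNz mulNr (homN hchi (chixn n.+1)).
Qed.

(* The value [cis t] assigned to [e] is well defined on [adjoin H e] exactly when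
   it is compatible with [chi] on the multiples of [e] that lie in [H]. *)
Lemma adjoin_hom chi H e t : hom chi -> is_subgroup H ->
  (forall j : int, H (e *~ j) -> chi (e *~ j) = cis (j%:~R * t)) ->
  exists f, hom_on_to_circle (adjoin H e) f /\
    forall h (k : int), H h -> f (h + e *~ k) = cmul (chi h) (cis (k%:~R * t)).
Proof.
move=> hchi sH compat.
pose val (p : G * int) := cmul (chi p.1) (cis (p.2%:~R * t)).
have val_eq h h' k k' : H h -> H h' -> h + e *~ k = h' + e *~ k' -> val (h, k) = val (h', k').
  move=> Hh Hh' hk; have ek : e *~ (k - k') = h' - h.
    by rewrite mulrzBr; apply/eqP; rewrite subr_eq addrAC -hk addrAC subrr add0r.
  have Hek : H (e *~ (k - k')) by rewrite ek; apply: subgroupB.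
  rewrite /val /= (hom_subr h' h hchi) -ek (compat _ Hek) (cmulC (cis _)) -cmulA cmul_cis.
  by congr (cmul _ (cis _)); rewrite intrB; ring.
pose f x := if pselect (exists p : G * int, H p.1 /\ x = p.1 + e *~ p.2) is left P
  then val (proj1_sig (cid P)) else cis 0.
have fE h k : H h -> f (h + e *~ k) = val (h, k).
  move=> Hh; rewrite /f; case: pselect => [P|]; last by case; exists (h, k).
  by case: (cid P) => -[h' k'] [/= Hh' hk]; apply: val_eq.
exists f; split; last by move=> h k Hh; rewrite fE.
split=> [_ [h [k [Hh ->]]]|_ _ [h1 [k1 [H1 ->]]] [h2 [k2 [H2 ->]]]].
  by rewrite fE //; apply: on_circle_cmul; [apply: hom_on_circle | apply: on_circle_cis].
rewrite addrACA -mulrzDr !fE //; last exact: subgroupD.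
rewrite /val /= homD // intrD mulrDl -cmul_cis.
by rewrite -!cmulA; congr cmul; rewrite !cmulA; congr cmul; apply: cmulC.
Qed.

End Homomorphism.

Lemma root_angle (R : realType) (s : R) (m : nat) : (2 <= m)%N ->
  exists t, cos t <= 0 /\ cis (m%:R * t) = cis s.
Proof.
move=> m_ge2; have m_gt0 : (0 : R) < m%:R by rewrite ltr0n; case: m m_ge2.
have pi_gt0 : (0 : R) < pi := @pi_gt0 R.
have two_pi_gt0 : (0 : R) < pi *+ 2 by rewrite mulrn_wgt0.
have two_pi_le : (pi : R) *+ 2 <= m%:R * pi.
  have : (2 : R) <= m%:R by rewrite (ler_nat R 2 m).
  rewrite mulr2n; nra.
(* [i] puts [m t] in [[m pi / 2, m pi / 2 + 2 pi]], hence [t] in [[pi / 2, pi / 2 + pi]]. *)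
pose i := Num.ceil ((m%:R * (pi / 2) - s) / (pi *+ 2)).
have i_ge : (m%:R * (pi / 2) - s) / (pi *+ 2) <= i%:~R by apply: ceil_ge.
have i_lt : (i - 1)%:~R < (m%:R * (pi / 2) - s) / (pi *+ 2) by apply: ceilB1_lt.
rewrite ler_pdivrMr // in i_ge; rewrite ltr_pdivlMr // intrB in i_lt.
exists ((s + i%:~R * (pi *+ 2)) / m%:R); split.
  apply: cos_le0_halfturn; apply/andP; split.
    by rewrite ler_pdivlMr //; lra.
  by rewrite ler_pdivrMr //; lra.
by rewrite mulrC divfK ?cis_periodic // gt_eqF.
Qed.

Section CompatibleAngle.
Variables (R : realType) (G : zmodType).
Implicit Types (chi : G -> R * R) (H : set G) (e : G).

Lemma least_multiple_dvd H e (m : nat) : is_subgroup H -> (0 < m)%N -> H (e *+ m) ->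
  (forall n, (0 < n)%N -> H (e *+ n) -> (m <= n)%N) ->
  forall j : int, H (e *~ j) -> (m %| j)%Z.
Proof.
move=> sH m_gt0 Hm m_least j Hj; apply/dvdz_mod0P.
have m0 : m%:Z != 0 by rewrite eqz_nat -lt0n.
have r_ge0 := modz_ge0 j m0; have r_lt := ltz_mod j m0.
have Hr : H (e *~ (j %% m)%Z).
  have -> : e *~ (j %% m)%Z = e *~ j - (e *+ m) *~ (j %/ m)%Z.
    by rewrite pmulrn -mulrzA -mulrzBr; congr (_ *~ _); rewrite {2}(divz_eq j m); ring.
  by apply: subgroupB => //; apply: subgroupMz.
apply/eqP/negPn/negP => r_neq0.
have : (m <= `|(j %% m)%Z|)%N.
  by apply: m_least; [rewrite absz_gt0 | rewrite pmulrn abszE ger0_norm].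
by rewrite leqNgt -ltz_nat abszE ger0_norm // r_lt.
Qed.

(* The image of [e] can be pushed into the half plane [Re <= 0] compatibly with
   [chi]: if [m e] is the least multiple of [e] in [H] then [m >= 2], and an
   [m]-th root of [chi (m e)] with nonpositive real part always exists. *)
Lemma compatible_angle chi H e : hom_on_to_circle [set: G] chi -> is_subgroup H -> ~ H e ->
  exists t, cos t <= 0 /\ forall j : int, H (e *~ j) -> chi (e *~ j) = cis (j%:~R * t).
Proof.
move=> hchi sH He.
case: (pselect (exists n, (0 < n)%N /\ H (e *+ n))) => [mult_ex|no_mult]; last first.
  exists pi; split=> [|j Hj]; first by rewrite cospi lerN10.
  suff -> : j = 0 by rewrite mulr0z mul0r hom0.
  apply/eqP/negPn/negP => j_neq0; apply: no_mult; exists `|j|%N.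
  split; first by rewrite absz_gt0.
  have [j_ge0|j_lt0] := lerP 0 j; first by rewrite pmulrn abszE ger0_norm.
  by rewrite pmulrn abszE ler0_norm ?ltW // mulrNz; apply: subgroupN.
have mult_exb : exists n, (0 < n)%N && `[< H (e *+ n) >].
  by case: mult_ex => n [n_gt0 Hn]; exists n; rewrite n_gt0; apply/asboolP.
case: (ex_minnP mult_exb) => m /andP [m_gt0 /asboolP Hm] m_least.
have m_ge2 : (2 <= m)%N.
  by move: m_gt0 Hm; rewrite leq_eqVlt orbC => /orP [//|/eqP <-]; rewrite mulr1n.
have [s chim] := on_circleP (hom_on_circle (e *+ m) hchi).
have [t [cos_t tm]] := root_angle s m_ge2.
rewrite -tm in chim; exists t; split=> // j Hj.
have m_least' n : (0 < n)%N -> H (e *+ n) -> (m <= n)%N.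
  by move=> n_gt0 Hn; apply: m_least; rewrite n_gt0; apply/asboolP.
have /dvdzP [q ->] := least_multiple_dvd sH m_gt0 Hm m_least' Hj.
by rewrite mulrC mulrzA -pmulrn (homMz _ hchi chim) intrM mulrA [_ * q%:~R]mulrC.
Qed.

End CompatibleAngle.

Section Sequences.
Variable T : Type.
Implicit Types (s : nat -> T) (P : nat -> Prop) (phi : nat -> nat).

Definition infinitely_often P := forall M, exists2 n, (M <= n)%N & P n.

Definition eventually_ne s := forall z, exists M, forall n, (M <= n)%N -> s n <> z.

Lemma infinitely_oftenP P : infinitely_often P ->
  exists phi, (forall k, (k <= phi k)%N) /\ forall k, P (phi k).
Proof.
move=> /(_ _)/cid2 io; exists (fun k => sval (io k)).
by split=> k; case: (io k).
Qed.

Lemma not_infinitely_often P : ~ infinitely_often P ->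
  exists M, forall n, (M <= n)%N -> ~ P n.
Proof.
move=> nio; apply: contrapT => all_M; apply: nio => M.
by apply: contrapT => no_n; apply: all_M; exists M => n Mn Pn; apply: no_n; exists n.
Qed.

Lemma eventually_ne_sub s phi : eventually_ne s -> (forall k, (k <= phi k)%N) ->
  eventually_ne (s \o phi).
Proof.
move=> s_ne phi_ge z; have [M sM] := s_ne z.
by exists M => n Mn; apply: sM; apply: leq_trans Mn (phi_ge n).
Qed.

End Sequences.

Section PropertyH.
Variables (R : realType) (G : topologicalZmodType).
Implicit Types (chi f : G -> R * R) (H : set G) (s : nat -> G) (x y c d : G).

Local Notation character chi := (@continuous_character R G chi).

Lemma character_hom chi : character chi -> hom_on_to_circle [set: G] chi.
Proof. by case. Qed.

Lemma character_cst : character (fun _ => cis 0).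
Proof. by split; [apply: hom_cst | apply: cst_continuous]. Qed.

Lemma character_eclose chi x eps : character chi -> 0 < eps ->
  nbhs x [set y | eclose (chi y) (chi x) eps].
Proof.
move=> [_ chi_cont] eps_gt0.
have : nbhs x (chi @^-1` ball (chi x) eps) := chi_cont x _ (nbhsx_ballx (chi x) eps eps_gt0).
apply: filterS => y; rewrite /ball /= /prod_ball /= => -[].
by rewrite /eclose /ball /= => ? ?; split; rewrite distrC.
Qed.

Lemma character_eclose_family (chis : nat -> G -> R * R) x eps :
  (forall i, character (chis i)) -> 0 < eps ->
  forall m, nbhs x [set y | forall i, (i < m)%N -> eclose (chis i y) (chis i x) eps].
Proof.
move=> chisC eps_gt0; elim=> [|m IH]; first exact: filterE.
apply: filterS (filterI IH (character_eclose x (chisC m) eps_gt0)) => y [near_y near_m] i.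
by rewrite ltnS leq_eqVlt => /orP [/eqP ->|]; [exact: near_m | exact: near_y].
Qed.

Definition cvg_along chi s c := forall eps : R, 0 < eps ->
  exists M, forall n, (M <= n)%N -> eclose (chi (s n)) (chi c) eps.

Definition char_cvg s c := forall chi, character chi -> cvg_along chi s c.

Lemma cvg_along_sub chi s c (phi : nat -> nat) : cvg_along chi s c ->
  (forall k, (k <= phi k)%N) -> cvg_along chi (s \o phi) c.
Proof.
move=> s_cvg phi_ge eps eps_gt0; have [M sM] := s_cvg eps eps_gt0.
by exists M => n Mn; apply: sM; apply: leq_trans Mn (phi_ge n).
Qed.

Lemma char_cvg_sub s c (phi : nat -> nat) : char_cvg s c -> (forall k, (k <= phi k)%N) ->
  char_cvg (s \o phi) c.
Proof. by move=> s_cvg phi_ge chi chiC; apply: cvg_along_sub (s_cvg chi chiC) phi_ge. Qed.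

Hypothesis hh : property_h R G.

Lemma separating_character H x : countable H -> is_subgroup H -> ~ H x ->
  exists chi, [/\ character chi, (forall h, H h -> chi h = cis 0) & (chi x).1 <= 0].
Proof.
move=> cH sH Hx.
have [t [cos_t compat]] := compatible_angle (@hom_cst R G) sH Hx.
have [f [hom_f fE]] := adjoin_hom (@hom_cst R G) sH compat.
have [chi [chiC chiE]] := hh (adjoin_subgroup x sH) (adjoin_countable x cH) hom_f.
exists chi; split=> // [h Hh|].
  rewrite chiE; last exact: adjoin_subl.
  have -> : h = h + x *~ 0 by rewrite mulr0z addr0.
  by rewrite fE // mul0r cmul_cis0.
rewrite chiE; last exact: adjoin_gen.
have {1}-> : x = 0 + x *~ 1 by rewrite mulr1z add0r.
rewrite fE; last exact: subgroup0.
by rewrite mulr1z mul1r cmul_cis0.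
Qed.

Lemma countable_subgroup_closed H x : countable H -> is_subgroup H -> ~ H x ->
  nbhs x (~` H).
Proof.
move=> cH sH Hx; have [chi [chiC chiH chix]] := separating_character cH sH Hx.
apply: filterS (character_eclose x chiC ltr01) => y [+ _] Hy.
by rewrite chiH // /cis cos0 /= => /ltr_normlP [? ?]; lra.
Qed.

Lemma char_cvg_coset H s c d : countable H -> is_subgroup H ->
  (forall n, H (s n - d)) -> char_cvg s c -> H (c - d).
Proof.
move=> cH sH Hs s_cvg; apply: contrapT => Hcd.
have [chi [chiC chiH chicd]] := separating_character cH sH Hcd.
have [M sM] := s_cvg chi chiC 1 ltr01; have hom_chi := character_hom chiC.
move: (sM M (leqnn M)); rewrite (hom_subr (s M) d hom_chi) (hom_subr c d hom_chi).
rewrite chiH // cmul_cis0 => /eclose_sym.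
by apply: cmul_not_eclose => //; apply: hom_on_circle.
Qed.

End PropertyH.

Section Kronecker.
Variables (R : realType) (x : nat -> int).
Hypothesis x_ne : eventually_ne x.

Lemma eventually_ne_int_unbounded (B : nat) : exists M, forall n, (M <= n)%N -> (B <= `|x n|)%N.
Proof.
elim: B => [|B [M1 xM1]]; first by exists 0%N.
have [M2 xM2] := x_ne B%:Z; have [M3 xM3] := x_ne (- B%:Z).
exists (maxn M1 (maxn M2 M3)) => n; rewrite !geq_max => /and3P [n1 n2 n3].
by have := xM1 n n1; have := xM2 n n2; have := xM3 n n3; lia.
Qed.

(* On an interval of length [l >= 4 pi / |y|] the function [t |-> cos (y t)]
   runs through a full period, hence has a half-period [pi / |y|] of nonpositivity. *)
Lemma cos_le0_subinterval (y : int) (a l : R) : pi *+ 4 <= (`|y|%N)%:R * l ->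
  exists a', [/\ a <= a', a' + pi / (`|y|%N)%:R <= a + l &
    forall t, a' <= t <= a' + pi / (`|y|%N)%:R -> cos (y%:~R * t) <= 0].
Proof.
set Y : R := (`|y|%N)%:R => Yl.
have pi_gt0 : (0 : R) < pi := @pi_gt0 R.
have two_pi_gt0 : (0 : R) < pi *+ 2 by rewrite mulrn_wgt0.
have Y_gt0 : 0 < Y.
  rewrite lt_neqAle ler0n andbT; apply/negP => /eqP Y0; rewrite -Y0 mul0r in Yl.
  by move: Yl; rewrite leNgt mulrn_wgt0.
rewrite !mulrS mulr0n addr0 in Yl.
pose q := Num.ceil ((Y * a - pi / 2) / (pi *+ 2)).
have q_ge : (Y * a - pi / 2) / (pi *+ 2) <= q%:~R by apply: ceil_ge.
have q_lt : (q - 1)%:~R < (Y * a - pi / 2) / (pi *+ 2) by apply: ceilB1_lt.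
rewrite ler_pdivrMr // [Y * a]mulrC in q_ge; rewrite ltr_pdivlMr // intrB [Y * a]mulrC in q_lt.
exists ((q%:~R * (pi *+ 2) + pi / 2) / Y); split.
- by rewrite ler_pdivlMr //; lra.
- by rewrite -mulrDl ler_pdivrMr //; lra.
move=> t /andP [t_ge t_le].
rewrite -mulrDl ler_pdivlMr // mulr2n in t_le; rewrite ler_pdivrMr // mulr2n in t_ge.
have -> : cos (y%:~R * t) = cos (Y * t).
  rewrite /Y natr_absz intr_norm; have [y_ge0|y_lt0] := lerP 0 (y%:~R : R).
    by rewrite ger0_norm.
  by rewrite ltr0_norm // mulNr cosN.
rewrite -[Y * t](subrK (q%:~R * (pi *+ 2))).
have [-> _] := congr1 (fun z => (z.1, z.2)) (cis_periodic q (Y * t - q%:~R * (pi *+ 2))).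
by apply: cos_le0_halfturn; apply/andP; rewrite mulr2n in t_ge t_le *; split; lra.
Qed.

Lemma kronecker_step (a l : R) (N : nat) : 0 < l ->
  exists a' l' n, [/\ 0 < l', a <= a', a' + l' <= a + l, (N < n)%N &
    forall t, a' <= t <= a' + l' -> cos ((x n)%:~R * t) <= 0].
Proof.
move=> l_gt0; pose B := `|Num.ceil (pi *+ 4 / l)|%N.
have B_large : pi *+ 4 <= B%:R * l.
  rewrite -ler_pdivrMr // /B natr_absz intr_norm.
  exact: le_trans (ceil_ge _) (ler_norm _).
have [M xM] := eventually_ne_int_unbounded B.
pose n := maxn N.+1 M.
have xn_large : pi *+ 4 <= (`|x n|%N)%:R * l.
  by apply: le_trans B_large _; rewrite ler_pM2r // ler_nat xM // leq_maxr.
have [a' [a_le a'_le cos_le]] := cos_le0_subinterval a xn_large.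
exists a', (pi / (`|x n|%N)%:R), n; split=> //; last by rewrite leq_maxl.
rewrite divr_gt0 ?pi_gt0 // lt_neqAle ler0n andbT; apply/negP => /eqP xn0.
by move: xn_large; rewrite -xn0 mul0r leNgt mulrn_wgt0 // pi_gt0.
Qed.

Record window := Window { wlo : R; wlen : R; widx : nat }.

Definition next_window (w w' : window) := 0 < wlen w ->
  [/\ 0 < wlen w', wlo w <= wlo w', wlo w' + wlen w' <= wlo w + wlen w, (widx w < widx w')%N &
    forall t, wlo w' <= t <= wlo w' + wlen w' -> cos ((x (widx w'))%:~R * t) <= 0].

Lemma infinitely_often_cos_le0 : exists t : R, infinitely_often (fun n => cos ((x n)%:~R * t) <= 0).
Proof.
have /choice [next nextP] : forall w, exists w', next_window w w'.
  move=> [a l N]; have [l_gt0|l_le0] := ltP 0 l; last first.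
    by exists (Window a l N); rewrite /next_window /= ltNge l_le0.
  by have [a' [l' [n ?]]] := kronecker_step a N l_gt0; exists (Window a' l' n).
pose w k := iter k next (Window 0 1 0).
have w_next k : next_window (w k) (w k.+1) by apply: nextP.
have w_len k : 0 < wlen (w k).
  by elim: k => [|k IH]; [apply: ltr01 | have [] := w_next k IH].
have w_nested k d : wlo (w k) <= wlo (w (k + d)%N) /\
    wlo (w (k + d)%N) + wlen (w (k + d)%N) <= wlo (w k) + wlen (w k).
  elim: d => [|d [lo_le hi_ge]]; first by rewrite addn0.
  rewrite addnS; have [_ ? ? _ _] := w_next (k + d)%N (w_len _).
  by split; [apply: le_trans lo_le _ | apply: le_trans hi_ge].
have lo_le_hi j k : wlo (w j) <= wlo (w k) + wlen (w k).
  have [jk|kj] := leqP j k.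
    have [+ _] := w_nested j (k - j)%N; rewrite subnKC // => /le_trans; apply.
    by rewrite lerDl ltW.
  have [_] := w_nested k (j - k)%N; rewrite subnKC ?(ltnW kj) //; apply: le_trans.
  by rewrite lerDl ltW.
have w_idx k : (k <= widx (w k))%N.
  elim: k => [|k IH] //; have [_ _ _ ? _] := w_next k (w_len k); lia.
pose E := [set wlo (w k) | k in [set: nat]].
have E_ub k : ubound E (wlo (w k) + wlen (w k)) by move=> _ [j _ <-]; apply: lo_le_hi.
have E_bounded : has_ubound E by exists (wlo (w 0%N) + wlen (w 0%N)).
have E_n0 : E !=set0 by exists (wlo (w 0%N)), 0%N.
exists (sup E) => M; have [_ _ _ idx_gt cos_le] := w_next M (w_len M).
exists (widx (w M.+1)); first by apply: leq_trans (w_idx M) (ltnW idx_gt).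
by apply: cos_le; apply/andP; split; [apply: ub_le_sup => //; exists M.+1 | apply: ge_sup].
Qed.

End Kronecker.

Section Span.
Variables (G : zmodType) (a : nat -> G).

Definition lincomb r (k : nat -> int) : G := \sum_(i < r) a i *~ k i.

Definition zspan r := [set y | exists k, y = lincomb r k].

Definition zspan_all := [set y | exists r, zspan r y].

Lemma zspan_subgroup r : is_subgroup (zspan r).
Proof.
split; first by exists (fun _ => 0); rewrite /lincomb big1 // => i _; rewrite mulr0z.
move=> _ _ [k1 ->] [k2 ->]; exists (fun i => k1 i - k2 i).
by rewrite /lincomb -sumrB; apply: eq_bigr => i _; rewrite mulrzBr.
Qed.

Lemma zspan_countable r : countable (zspan r).
Proof.
apply: (@sub_countable _ _ _ ((fun s : seq int => lincomb r (nth 0 s)) @` [set: seq int])).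
  apply: subset_card_le => _ [k ->]; exists (mkseq k r) => //.
  by apply: eq_bigr => i _; rewrite nth_mkseq.
exact: sub_countable (card_image_le _ _) _.
Qed.

Lemma zspan0 y : zspan 0 y -> y = 0.
Proof. by move=> [k ->]; rewrite /lincomb big_ord0. Qed.

Lemma zspanS r y : zspan r.+1 y <-> adjoin (zspan r) (a r) y.
Proof.
split=> [[k ->]|[_ [j [[k ->] ->]]]].
  by exists (lincomb r k), (k r); split; [exists k | rewrite /lincomb big_ord_recr].
exists (fun i => if i == r then j else k i).
rewrite /lincomb big_ord_recr /= eqxx; congr (_ + _).
by apply: eq_bigr => i _ /=; rewrite ifN // neq_ltn ltn_ord.
Qed.

Lemma zspan_mono r r' : (r <= r')%N -> zspan r `<=` zspan r'.
Proof.
move=> rr' _ [k ->]; exists (fun i => if (i < r)%N then k i else 0).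
rewrite /lincomb (big_ord_widen _ (fun i => a i *~ k i) rr') big_mkcond /=.
by apply: eq_bigr => i _; case: ifP => //; rewrite mulr0z.
Qed.

Lemma zspan_gen n : zspan n.+1 (a n).
Proof.
exists (fun i => if i == n then 1 else 0).
rewrite /lincomb big_ord_recr /= eqxx mulr1z big1 ?add0r // => i _.
by rewrite ifN ?mulr0z // neq_ltn ltn_ord.
Qed.

Lemma zspan_all_subgroup : is_subgroup zspan_all.
Proof.
split; first by exists 0%N; apply: subgroup0; apply: zspan_subgroup.
move=> x y [r1 x_r1] [r2 y_r2]; exists (maxn r1 r2); apply: subgroupB.
- exact: zspan_subgroup.
- by apply: zspan_mono x_r1; rewrite leq_maxl.
- by apply: zspan_mono y_r2; rewrite leq_maxr.
Qed.

Lemma zspan_all_countable : countable zspan_all.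
Proof.
have -> : zspan_all = \bigcup_r zspan r.
  by apply/seteqP; split=> y [r]; [exists r | move=> _; exists r].
by apply: bigcup_countable => // r _; apply: zspan_countable.
Qed.

End Span.

Lemma multiples_trivial (G : zmodType) (H : set G) (e : G) (w : nat -> G) :
  is_subgroup H -> (forall n, adjoin H e (w n)) ->
  (forall k : int, exists M, forall n, (M <= n)%N -> ~ H (w n - e *~ k)) ->
  forall j : int, H (e *~ j) -> j = 0.
Proof.
move=> sH w_adj w_out j Hj; apply/eqP/negPn/negP => j_neq0.
pose p := `|j|%N; have p_gt0 : (0 < p)%N by rewrite absz_gt0.
have Hp : H (e *~ p%:Z).
  rewrite /p abszE; have [j_ge0|j_lt0] := lerP 0 j; first by rewrite ger0_norm.
  by rewrite ltr0_norm // mulrNz; apply: subgroupN.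
have residues_out (q : nat) : exists M, forall n, (M <= n)%N ->
    forall rho : nat, (rho < q)%N -> ~ H (w n - e *~ rho%:Z).
  elim: q => [|q [M1 wM1]]; first by exists 0%N.
  have [M2 wM2] := w_out q%:Z; exists (maxn M1 M2) => n; rewrite geq_max => /andP [n1 n2] rho.
  by rewrite ltnS leq_eqVlt => /orP [/eqP ->|]; [apply: wM2 | apply: wM1].
have [M wM] := residues_out p; have [h [k [Hh wE]]] := w_adj M.
have p0 : p%:Z != 0 by rewrite eqz_nat -lt0n.
have rho_ge0 := modz_ge0 k p0; have rho_lt := ltz_mod k p0.
apply: (wM M (leqnn M) `|(k %% p%:Z)%Z|%N).
  by rewrite -ltz_nat abszE ger0_norm.
have -> : w M - e *~ `|(k %% p%:Z)%Z|%N%:Z = h + (e *~ p%:Z) *~ (k %/ p%:Z)%Z.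
  rewrite wE abszE ger0_norm // -mulrzA -addrA -mulrzBr; congr (_ + _ *~ _).
  by rewrite {1}(divz_eq k p%:Z); ring.
by apply: subgroupD => //; apply: subgroupMz.
Qed.

Section FiniteRank.
Variables (R : realType) (G : topologicalZmodType).
Hypothesis hh : property_h R G.

(* The character trivial on [H] sending [e] to a Kronecker angle [t] for the
   coefficients [k n] keeps [s n - c] in the left half plane infinitely often. *)
Lemma no_char_cvg_escaping (H : set G) e (s : nat -> G) c (k : nat -> int) :
  countable H -> is_subgroup H -> (forall j : int, H (e *~ j) -> j = 0) ->
  (forall n, H (s n - c - e *~ k n)) -> eventually_ne k -> ~ char_cvg R s c.
Proof.
move=> cH sH e_free sk k_ne s_cvg.
have [t cos_kt] := infinitely_often_cos_le0 R k_ne.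
have compat (j : int) : H (e *~ j) -> cis 0 = cis (j%:~R * t).
  by move=> /e_free ->; rewrite mul0r.
have [f [hom_f fE]] := adjoin_hom (@hom_cst R G) sH compat.
have [chi [chiC chiE]] := hh (adjoin_subgroup e sH) (adjoin_countable e cH) hom_f.
have [M sM] := s_cvg chi chiC 1 ltr01; have [n Mn cos_le] := cos_kt M.
have snc : s n - c = (s n - c - e *~ k n) + e *~ k n by rewrite subrK.
move: (sM n Mn); rewrite (hom_subr (s n) c (character_hom chiC)) chiE; last first.
  by rewrite snc; exists (s n - c - e *~ k n), (k n).
rewrite snc fE //= cmul_cis0; apply: cmul_not_eclose => //.
  exact: on_circle_cis.
exact: hom_on_circle (character_hom chiC).
Qed.

Variable a : nat -> G.

Lemma no_char_cvg_zspan r : forall d (s : nat -> G) c,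
  (forall n, zspan a r (s n - d)) -> eventually_ne s -> ~ char_cvg R s c.
Proof.
elim: r => [|r IH] d s c s_span s_ne s_cvg.
  have [M sM] := s_ne d; apply: (sM M (leqnn M)).
  by apply/eqP; rewrite -subr_eq0; apply/eqP/zspan0/s_span.
set H := zspan a r; set e := a r.
have sH : is_subgroup H := zspan_subgroup a r.
have /(zspanS a r) [hc [kc [Hhc cdE]]] : zspan a r.+1 (c - d).
  exact: char_cvg_coset (zspan_countable a r.+1) (zspan_subgroup a r.+1) s_span s_cvg.
have s_adj n : adjoin H e (s n - d) by apply/zspanS.
case: (pselect (exists k : int, infinitely_often (fun n => H (s n - d - e *~ k))))
  => [[k /infinitely_oftenP [phi [phi_ge Hphi]]]|no_coset].
  apply: (IH (d + e *~ k) (s \o phi) c); last exact: char_cvg_sub.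
    by move=> n; rewrite /= opprD addrA; apply: Hphi.
  exact: eventually_ne_sub.
have out k : exists M, forall n, (M <= n)%N -> ~ H (s n - d - e *~ k).
  by apply: not_infinitely_often => io; apply: no_coset; exists k.
have /choice [kn kn_coset] n : exists k, H (s n - d - e *~ k).
  by have [h [k [Hh ->]]] := s_adj n; exists k; rewrite addrK.
apply: (no_char_cvg_escaping (k := fun n => kn n - kc) (zspan_countable a r) sH
  (multiples_trivial sH s_adj out) _ _ s_cvg).
- move=> n; rewrite mulrzBr; apply: subgroup_coset_diff (kn_coset n) _ => //.
  by rewrite cdE addrK.
- move=> v; have [M sM] := out (v + kc); exists M => n Mn knv; apply: (sM n Mn).
  by rewrite -knv subrK; apply: kn_coset.
Qed.

End FiniteRank.

Lemma union_hom (R : realType) (G : zmodType) (M : nat -> set G) (f : nat -> G -> R * R) :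
  (forall k, is_subgroup (M k)) -> (forall k, M k `<=` M k.+1) ->
  (forall k, hom_on_to_circle (M k) (f k)) -> (forall k y, M k y -> f k.+1 y = f k y) ->
  exists g, hom_on_to_circle (\bigcup_k M k) g /\ forall k y, M k y -> g y = f k y.
Proof.
move=> sM MS hom_f fS.
have chain k l y : (k <= l)%N -> M k y -> M l y /\ f l y = f k y.
  move=> /subnKC <-; elim: (l - k)%N => [|d IH] My; first by rewrite addn0.
  by have [Md fd] := IH My; rewrite addnS fS //; split=> //; apply: MS.
pose g y := if pselect (exists k, M k y) is left P then f (sval (cid P)) y else cis 0.
have gE k y : M k y -> g y = f k y.
  move=> My; rewrite /g; case: pselect => [P|]; last by case; exists k.
  case: (cid P) => k' My' /=; have [kk'|k'k] := leqP k k'.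
    by rewrite (chain _ _ _ kk' My).2.
  by rewrite (chain _ _ _ (ltnW k'k) My').2.
exists g; split=> //; split=> [y [k _ My]|x y [k _ Mx] [l _ My]].
  by rewrite (gE _ _ My); case: (hom_f k) => + _; apply.
have Mx' := (chain _ (maxn k l) _ (leq_maxl k l) Mx).1.
have My' := (chain _ (maxn k l) _ (leq_maxr k l) My).1.
rewrite !(gE (maxn k l)) //; last exact: subgroupD.
by case: (hom_f (maxn k l)) => _; apply.
Qed.

Section InfiniteRank.
Variables (R : realType) (G : topologicalZmodType).
Hypothesis hh : property_h R G.

Local Notation character chi := (@continuous_character R G chi).

Lemma union_character (M : nat -> set G) (chis : nat -> G -> R * R) :
  (forall k, is_subgroup (M k)) -> (forall k, countable (M k)) -> (forall k, M k `<=` M k.+1) ->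
  (forall k, character (chis k)) -> (forall k y, M k y -> chis k.+1 y = chis k y) ->
  exists chi, character chi /\ forall k y, M k y -> chi y = chis k y.
Proof.
move=> sM cM MS chisC chisS.
have hom_chis k : hom_on_to_circle (M k) (chis k).
  by have [[chi_circ chiD] _] := chisC k; split=> *; [apply: chi_circ | apply: chiD].
have [g [hom_g gE]] := union_hom sM MS hom_chis chisS.
have [chi [chiC chiE]] := hh (subgroup_bigcup sM MS) (bigcup_countable (countableP _) (fun k _ => cM k)) hom_g.
exists chi; split=> // k y My.
by rewrite chiE; [apply: gE | exists k].
Qed.

Variables (a : nat -> G) (s : nat -> G).
Hypothesis s_span : forall n, zspan_all a (s n).
Hypothesis s_escapes : forall r, exists M, forall n, (M <= n)%N -> ~ zspan a r (s n).

Record stage := Stage { stage_chi : G -> R * R; stage_grp : set G; stage_idx : nat }.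

Definition stage_inv st := [/\ character (stage_chi st), is_subgroup (stage_grp st),
  countable (stage_grp st) & exists r, stage_grp st `<=` zspan a r].

Definition next_stage st st' := stage_inv st -> [/\ stage_inv st',
  (stage_idx st < stage_idx st')%N, stage_grp st `<=` stage_grp st',
  forall y, stage_grp st y -> stage_chi st' y = stage_chi st y &
  stage_grp st' (s (stage_idx st')) /\ (stage_chi st' (s (stage_idx st'))).1 <= 0].

(* As [stage_grp st] lies in a finitely generated [zspan a r], some late [s n]
   avoids it, and [compatible_angle] sends [s n] to the left half plane. *)
Lemma next_stage_ex st : exists st', next_stage st st'.
Proof.
case: (pselect (stage_inv st)) => [[chiC sM cM [r Mr]]|no_inv]; last by exists st.
have [N sN] := s_escapes r; pose n := maxn (stage_idx st).+1 N.
have Msn : ~ stage_grp st (s n) by move=> /Mr; apply: sN; rewrite leq_maxr.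
have [t [cos_t compat]] := compatible_angle (character_hom chiC) sM Msn.
have [f [hom_f fE]] := adjoin_hom (character_hom chiC) sM compat.
have [chi' [chi'C chi'E]] := hh (adjoin_subgroup (s n) sM) (adjoin_countable (s n) cM) hom_f.
have [r' sn_r'] := s_span n.
exists (Stage chi' (adjoin (stage_grp st) (s n)) n) => _ /=; split.
- split=> //; [exact: adjoin_subgroup | exact: adjoin_countable |].
  exists (maxn r r') => _ [h [k [Mh ->]]].
  apply: subgroupD; first exact: zspan_subgroup.
    by apply: zspan_mono (Mr _ Mh); rewrite leq_maxl.
  by apply: subgroupMz; [exact: zspan_subgroup | apply: zspan_mono sn_r'; rewrite leq_maxr].
- by rewrite leq_maxl.
- by move=> y My; apply: adjoin_subl.
- move=> y My; rewrite chi'E; last exact: adjoin_subl.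
  have {1}-> : y = y + s n *~ 0 by rewrite mulr0z addr0.
  by rewrite fE // mul0r cmulC cmul_cis0.
split; first exact: adjoin_gen.
rewrite chi'E; last exact: adjoin_gen.
have {1}-> : s n = 0 + s n *~ 1 by rewrite mulr1z add0r.
have chi0 : stage_chi st 0 = cis 0 := hom0 (character_hom chiC).
rewrite fE; last exact: subgroup0.
by rewrite chi0 cmul_cis0 mulr1z mul1r.
Qed.

Lemma no_char_cvg_zspan_escaping c : ~ char_cvg R s c.
Proof.
move=> s_cvg.
have [r0 c_r0] : zspan_all a c.
  have := char_cvg_coset hh (d := 0) (zspan_all_countable a) (zspan_all_subgroup a) _ s_cvg.
  by rewrite subr0; apply=> n; rewrite subr0.
have /choice [next nextP] := next_stage_ex.
pose st k := iter k next (Stage (fun _ => cis 0) (zspan a r0) 0).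
have st_step k : next_stage (st k) (st k.+1) := nextP (st k).
have st_inv k : stage_inv (st k).
  elim: k => [|k IH]; last by have [] := st_step k IH.
  by split; [apply: character_cst | apply: zspan_subgroup | apply: zspan_countable | exists r0].
have st_next k := st_step k (st_inv k).
have st_idx k : (k <= stage_idx (st k))%N.
  by elim: k => [|k IH] //; have [_ ? _ _ _] := st_next k; lia.
have st_grp k : is_subgroup (stage_grp (st k)) /\ countable (stage_grp (st k)).
  by case: (st_inv k).
have [chi [chiC chiE]] : exists chi, character chi /\
    forall k y, stage_grp (st k) y -> chi y = stage_chi (st k) y.
  apply: union_character => k; [exact: (st_grp k).1 | exact: (st_grp k).2 | | |].
  - by case: (st_next k).
  - by case: (st_inv k).
  - by case: (st_next k) => _ _ _ + _; apply.
have [M sM] := s_cvg chi chiC 1 ltr01; have [_ idx_gt _ _ [sn_in sn_le0]] := st_next M.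
move: (sM _ (leq_trans (st_idx M) (ltnW idx_gt))).
rewrite (chiE M.+1 _ sn_in) (chiE 0%N c c_r0) => /eclose_cis0_gt0.
by rewrite ltNge sn_le0.
Qed.

End InfiniteRank.

Lemma no_char_cvg_zspan_all (R : realType) (G : topologicalZmodType) (hh : property_h R G)
  (a s : nat -> G) c : (forall n, zspan_all a (s n)) -> eventually_ne s -> ~ char_cvg R s c.
Proof.
move=> s_span s_ne s_cvg.
case: (pselect (exists r, infinitely_often (fun n => zspan a r (s n))))
  => [[r /infinitely_oftenP [phi [phi_ge phi_r]]]|no_r].
  apply: (no_char_cvg_zspan hh (d := 0) (s := s \o phi)); last exact: char_cvg_sub s_cvg phi_ge.
    by move=> n; rewrite subr0; apply: phi_r.
  exact: eventually_ne_sub s_ne phi_ge.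
apply: (no_char_cvg_zspan_escaping hh s_span _ s_cvg) => r.
by apply: not_infinitely_often => io; apply: no_r; exists r.
Qed.

Lemma infinite_set_injective_seq (T : Type) (K : set T) : infinite_set K ->
  exists a : nat -> T, injective a /\ forall n, K (a n).
Proof.
move=> /infiniteP /card_leP [f].
exists (fun n => val (f (@SigSub _ _ _ n (mem_set (I : [set: nat] n))))); split=> [n m|n].
  by move=> /val_inj /(@inj _ _ _ f _ _ (in_setT _) (in_setT _)) /(congr1 val).
exact: set_valP.
Qed.

Lemma injective_eventually_ne (T : Type) (a : nat -> T) : injective a -> eventually_ne a.
Proof.
move=> a_inj z; case: (pselect (exists p, a p = z)) => [[p <-]|no_p].
  by exists p.+1 => n pn /a_inj np; move: pn; rewrite np ltnn.
by exists 0%N => n _ anz; apply: no_p; exists n.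
Qed.

Section Cluster.
Variable T : topologicalType.
Implicit Types (u : nat -> T) (K B : set T) (p : T).

Lemma cluster_infinitely_often u p B : cluster (u @ \oo) p -> nbhs p B ->
  infinitely_often (fun n => B (u n)).
Proof.
move=> u_cl pB M.
have uM : (u @ \oo) [set y | exists2 n, (M <= n)%N & y = u n] by exists M => // n /= Mn; exists n.
by have [_ [[n Mn ->] Bun]] := u_cl _ _ uM pB; exists n.
Qed.

Lemma compact_seq_cluster K u : compact K -> (forall n, K (u n)) ->
  exists2 p, K p & cluster (u @ \oo) p.
Proof.
move=> cK uK; have [p [Kp p_cl]] : K `&` cluster (u @ \oo) !=set0.
  by apply: cK; exists 0%N => // n _; apply: uK.
by exists p.
Qed.

End Cluster.

Section Separation.
Variables (R : realType) (G : topologicalZmodType).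
Hypothesis hh : property_h R G.
Implicit Types (chi : G -> R * R) (N : set G) (u s : nat -> G) (c p : G).

Local Notation character chi := (@continuous_character R G chi).

Lemma cluster_mem_subgroup N u p : countable N -> is_subgroup N ->
  (forall n, N (u n)) -> cluster (u @ \oo) p -> N p.
Proof.
move=> cN sN uN p_cl; apply: contrapT => Np.
have [n _ /= Nun] := cluster_infinitely_often p_cl (countable_subgroup_closed hh cN sN Np) 0.
exact: Nun.
Qed.

Lemma countable_enum N : countable N -> exists f : nat -> G, N `<=` range f.
Proof.
move=> /countable_injP [g g_inj].
pose f n := if pselect (exists2 y, N y & g y = n) is left P then sval (cid2 P) else 0.
exists f => y Ny; exists (g y) => //; rewrite /f; case: pselect => [P|]; last by case; exists y.
by case: (cid2 P) => y' Ny' /= /g_inj -> //; rewrite inE.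
Qed.

Lemma separating_family N : countable N -> exists chis : nat -> G -> R * R,
  (forall i, character (chis i)) /\ forall y, N y -> y <> 0 -> exists i, (chis i y).1 <= 0.
Proof.
move=> /countable_enum [f Nf].
have /choice [chis chisP] i : exists chi, character chi /\ (f i <> 0 -> (chi (f i)).1 <= 0).
  case: (pselect (f i = 0)) => [->|fi_neq0]; first by exists (fun _ => cis 0); split=> //; apply: character_cst.
  have s0 : is_subgroup [set (0 : G)] by split => // x y -> ->; rewrite subrr.
  have [chi [chiC _ chi_le0]] := separating_character hh (countable1 0) s0 fi_neq0.
  by exists chi.
exists chis; split=> [i|y /Nf [i _ <-] fi_neq0]; first by case: (chisP i).
by exists i; apply: (chisP i).2.
Qed.

Lemma diagonal_subsequence (chis : nat -> G -> R * R) u c :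
  (forall i, character (chis i)) -> cluster (u @ \oo) c ->
  exists phi, (forall n, (n <= phi n)%N) /\ forall i, cvg_along (chis i) (u \o phi) c.
Proof.
move=> chisC c_cl.
have /choice [phi phiP] n : exists m, (n <= m)%N /\
    forall i, (i < n.+1)%N -> eclose (chis i (u m)) (chis i c) n.+1%:R^-1.
  have inv_gt0 : (0 : R) < n.+1%:R^-1 by rewrite invr_gt0 ltr0n.
  by have [m ? ?] := cluster_infinitely_often c_cl (character_eclose_family c chisC inv_gt0 n.+1) n; exists m.
exists phi; split=> [n|i eps eps_gt0]; first by case: (phiP n).
have [k k_lt] := ltr_add_invr eps_gt0; rewrite add0r in k_lt.
exists (maxn i k) => n; rewrite geq_max => /andP [i_le k_le].
apply: eclose_le (ltW (le_lt_trans _ k_lt)) ((phiP n).2 i _); last by rewrite ltnS.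
by rewrite lef_pV2 ?posrE ?ltr0n // ler_nat.
Qed.

Lemma cluster_cvg_along chi u c p : character chi -> cvg_along chi u c ->
  cluster (u @ \oo) p -> chi p = chi c.
Proof.
move=> chiC u_cvg p_cl; apply: contrapT => /neq_not_eclose [e e_gt0 far].
have e2_gt0 : 0 < e / 2 by rewrite divr_gt0.
have [M uM] := u_cvg _ e2_gt0.
have [n Mn near_p] := cluster_infinitely_often p_cl (character_eclose p chiC e2_gt0) M.
by apply: far; rewrite (splitr e); apply: eclose_trans near_p (uM n Mn).
Qed.

Lemma separating_family_inj (chis : nat -> G -> R * R) N y z :
  (forall i, character (chis i)) -> is_subgroup N ->
  (forall x, N x -> x <> 0 -> exists i, (chis i x).1 <= 0) ->
  N y -> N z -> (forall i, chis i y = chis i z) -> y = z.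
Proof.
move=> chisC sN sep Ny Nz yz; apply/eqP; rewrite -subr_eq0; apply/eqP.
apply: contrapT => /(sep _ (subgroupB sN Ny Nz)) [i Re_le0].
have hom_i := character_hom (chisC i).
apply: cmul_not_eclose (hom_on_circle _ hom_i) Re_le0 (hom_on_circle z hom_i) _.
by rewrite -hom_subr // yz /eclose !subrr normr0.
Qed.

(* A subsequence staying away from [c] along some character clusters at a point
   of [K]; that point lies in [N] and is not separated from [c] by [chis]. *)
Lemma char_cvg_compact K N (chis : nat -> G -> R * R) s c :
  compact K -> (forall n, K (s n)) -> countable N -> is_subgroup N -> (forall n, N (s n)) -> N c ->
  (forall i, character (chis i)) -> (forall y, N y -> y <> 0 -> exists i, (chis i y).1 <= 0) ->
  (forall i, cvg_along (chis i) s c) -> char_cvg R s c.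
Proof.
move=> cK sK cN sN sNs Nc chisC sep s_cvg chi chiC eps eps_gt0; apply: contrapT => far.
have /infinitely_oftenP [phi [phi_ge phi_far]] :
    infinitely_often (fun n => ~ eclose (chi (s n)) (chi c) eps).
  move=> M; apply: contrapT => no_n; apply: far; exists M => n Mn.
  by apply: contrapT => ?; apply: no_n; exists n.
have [p Kp p_cl] := compact_seq_cluster cK (fun n => sK (phi n)).
have Np := cluster_mem_subgroup cN sN (fun n => sNs (phi n)) p_cl.
have pc : p = c.
  apply: (separating_family_inj chisC sN sep Np Nc) => i.
  exact: cluster_cvg_along (chisC i) (cvg_along_sub (s_cvg i) phi_ge) p_cl.
rewrite pc in p_cl; have [n _] := cluster_infinitely_often p_cl (character_eclose c chiC eps_gt0) 0.
exact: phi_far.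
Qed.

End Separation.

Unset Implicit Arguments.

Theorem lemma2p3 (R : realType) (G : topologicalZmodType)
  (hTB : totally_bounded_group G) (hh : property_h R G) :
  forall K : set G, compact K -> finite_set K.
Proof.
move=> K cK; apply: contrapT => /infinite_set_injective_seq [a [a_inj aK]].
have sN := zspan_all_subgroup a; have cN := zspan_all_countable a.
have aN n : zspan_all a (a n) by exists n.+1; apply: zspan_gen.
have [c Kc c_cl] := compact_seq_cluster cK aK.
have Nc := cluster_mem_subgroup hh cN sN aN c_cl.
have [chis [chisC sep]] := separating_family hh cN.
have [phi [phi_ge phi_cvg]] := diagonal_subsequence chisC c_cl.
apply: (no_char_cvg_zspan_all hh (s := a \o phi) (c := c) (fun n => aN (phi n))).
  exact: eventually_ne_sub (injective_eventually_ne a_inj) phi_ge.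
exact: char_cvg_compact cK (fun n => aK (phi n)) cN sN (fun n => aN (phi n)) Nc chisC sep phi_cvg.
Qed.
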